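(* Let $\lambda \geq 2$ be an integer and let $H(\lambda)_1, \dots, H(\lambda)_{r(\lambda)}$ be all graphs on $\lambda^2+2$ vertices that have at least one isolated vertex. Then there exists a positive integer $p'(\lambda)$ such that for every $i = 1, \dots, r(\lambda)$, the graph obtained from $H(\lambda)_i$ by adding a complete graph $K_{p'(\lambda)}$ on $p'(\lambda)$ new vertices and joining every new vertex to every vertex of $H(\lambda)_i$ has smallest adjacency eigenvalue less than $-\lambda$.
   Context: The smallest eigenvalue of a graph refers to the smallest eigenvalue of its adjacency matrix. (In the paper's language this graph is $G(\mathfrak{q}(H(\lambda)_i), p'(\lambda))$: the Hoffman graph $\mathfrak{q}(H)$ with one fat vertex adjacent to all vertices of $H$, with the fat vertex replaced by a clique $K_p$.) *)

From HB Require Import structures.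
From mathcomp Require Import all_boot all_order all_algebra.
From mathcomp Require Import reals.
Set Implicit Arguments. Unset Strict Implicit. Unset Printing Implicit Defensive.
Import Order.TTheory GRing.Theory Num.Theory.
Local Open Scope ring_scope.

Definition simple_graph n (e : rel 'I_n) : Prop :=
  symmetric e /\ irreflexive e.

Definition isolated n (e : rel 'I_n) (v : 'I_n) : Prop :=
  forall u, ~~ e v u.

Definition adj_mx (R : pzRingType) n (e : rel 'I_n) : 'M[R]_n :=
  \matrix_(i, j) (e i j)%:R.

Definition join_clique n (p : nat) (e : rel 'I_n) : rel 'I_(n + p) :=
  fun i j =>
    match split i, split j with
    | inl a, inl b => e a b
    | inr a, inr b => a != b
    | _, _ => true
    end.

Definition smallest_eigenvalue (R : realType) n (A : 'M[R]_n) (theta : R) : Prop :=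
  eigenvalue A theta /\ forall mu, eigenvalue A mu -> theta <= mu.
Arguments join_clique {n} p e _ _.

From HB Require Import structures.
From mathcomp Require Import all_boot all_order all_algebra.
From mathcomp Require Import reals.
From mathcomp Require Import complex polyrcf.
From mathcomp.algebra_tactics Require Import ring.
Set Implicit Arguments. Unset Strict Implicit. Unset Printing Implicit Defensive.
Import Order.TTheory GRing.Theory Num.Theory.
Local Open Scope ring_scope.

(* Rayleigh quotient: by the spectral theorem (over R[i]), a real symmetric
   matrix A with x A x^T < c x x^T has an eigenvalue below c.  For the graph
   H + K_p, put weight l^2 + l + 1 on the isolated vertex, l on the other
   l^2 + 1 vertices of H and -1 on the p = l (l^2 + l + 1) clique vertices.
   Whatever the edges of H, x A x^T + l x x^T <= -2p, so the smallest
   eigenvalue is below -l. *)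

Lemma eigenvalue_diag_similar (F : fieldType) n (P : 'M[F]_n) (d : 'rV_n) j :
  P \in unitmx -> eigenvalue (invmx P *m diag_mx d *m P) (d 0 j).
Proof.
move=> Pu; apply/eigenvalueP; exists ('e_j *m P).
  by rewrite !mulmxA mulmxK // -rowE row_diag_mx scalemxAl.
apply/eqP => /(congr1 (mulmx^~ (invmx P))) /=.
rewrite mulmxK // mul0mx => /matrixP/(_ 0 j); rewrite !mxE !eqxx /=.
by move/eqP; rewrite oner_eq0.
Qed.

Section Spectrum.
Local Open Scope sesquilinear_scope.

Lemma normal_quad_ge (C : numClosedFieldType) n (A : 'M[C]_n) (c : C)
    (x : 'rV_n) :
  A \is normalmx -> (forall j, c <= spectral_diag A 0 j) ->
  c * (x *m x^t*) 0 0 <= (x *m A *m x^t*) 0 0.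
Proof.
move=> /orthomx_spectralP AE hc; rewrite [in X in _ <= X]AE.
set P := spectralmx A in hc *; set d := spectral_diag A in hc *.
have PV : invmx P = P^t* := invmx_unitary (spectral_unitarymx A).
pose y := x *m P^t*.
have yE : x *m invmx P = y by rewrite PV.
have ytE : y^t* = P *m x^t* by rewrite trmx_mul map_mxM trmxCK.
have -> : x *m x^t* = y *m y^t*.
  by rewrite ytE mulmxA -yE mulmxKV // spectral_unit.
rewrite !mulmxA yE -[_ *m P *m _]mulmxA -ytE !mxE mulr_sumr.
apply: ler_sum => k _.
rewrite mul_mx_diag !mxE mulrAC [X in _ <= X]mulrC.
by rewrite ler_wpM2r ?hc ?mul_conjC_ge0.
Qed.

Lemma symmetric_quad_ge (R : rcfType) n (A : 'M[R]_n) (c : R) (x : 'rV_n) :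
  A^T = A -> (forall a, eigenvalue A a -> c <= a) ->
  c * (x *m x^T) 0 0 <= (x *m A *m x^T) 0 0.
Proof.
move=> Asym hc; pose toC := real_complex R.
have conj_toC (r : R) : (toC r)^* = toC r.
  by apply: conj_Creal; apply/complex_realP; exists r.
have toC_tr m (M : 'M[R]_(m, n)) : (map_mx toC M)^t* = map_mx toC M^T.
  by apply/matrixP => i j; rewrite !mxE conj_toC.
have toC00 (M : 'M[R]_1) : (map_mx toC M) 0 0 = toC (M 0 0) by rewrite mxE.
have Aherm : map_mx toC A \is hermsymmx.
  by apply/is_hermitianmxP; rewrite expr0 scale1r toC_tr Asym.
have Anormal := hermitian_normalmx Aherm.
have hcC j : toC c <= spectral_diag (map_mx toC A) 0 j.
  set d := spectral_diag _ 0 j.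
  have dE : toC (complex.Re d) = d.
    exact/RRe_real/(mxOverP (hermitian_spectral_diag_real Aherm)).
  have eig_d : eigenvalue (map_mx toC A) d.
    rewrite {1}(orthomx_spectralP Anormal).
    exact: eigenvalue_diag_similar (spectral_unit _).
  rewrite -dE lecR; apply: hc; rewrite -(eigenvalue_map toC).
  by move: eig_d; rewrite -dE.
have := normal_quad_ge (map_mx toC x) Anormal hcC.
by rewrite !toC_tr -!map_mxM !toC00 -rmorphM lecR.
Qed.

End Spectrum.

Lemma eigenvalue_rootsR (R : rcfType) n (A : 'M[R]_n) a :
  eigenvalue A a = (a \in rootsR (char_poly A)).
Proof.
rewrite -roots_on_rootsR ?monic_neq0 ?char_poly_monic //.
by rewrite eigenvalue_root_char in_itv.
Qed.

Lemma smallest_eigenvalue_head (R : realType) n (A : 'M[R]_n) theta s :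
  rootsR (char_poly A) = theta :: s -> smallest_eigenvalue A theta.
Proof.
move=> rootsE; split; first by rewrite eigenvalue_rootsR rootsE mem_head.
have : sorted <%R (rootsR (char_poly A)) := sorted_roots _ _ _.
rewrite rootsE /= => /(order_path_min lt_trans)/allP theta_min mu.
rewrite eigenvalue_rootsR rootsE inE => /predU1P [-> // | /theta_min/ltW //].
Qed.

Lemma symmetric_smallest_eigenvalue_lt (R : realType) n (A : 'M[R]_n)
    (x : 'rV[R]_n) (c : R) :
  A^T = A -> (x *m A *m x^T) 0 0 < c * (x *m x^T) 0 0 ->
  exists theta, smallest_eigenvalue A theta /\ theta < c.
Proof.
move=> Asym; rewrite ltNge => /negP quad_lt.
case rootsE: (rootsR (char_poly A)) => [|theta s].
  by case: quad_lt; apply: symmetric_quad_ge => // a;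
    rewrite eigenvalue_rootsR rootsE.
have [eig_theta theta_min] := smallest_eigenvalue_head rootsE.
exists theta; split => //; rewrite ltNge; apply/negP => c_le_theta.
by case: quad_lt; apply: symmetric_quad_ge => // a /theta_min; apply: le_trans.
Qed.

Lemma tr_adj_mx (R : pzRingType) n (e : rel 'I_n) :
  symmetric e -> (adj_mx R e)^T = adj_mx R e.
Proof. by move=> esym; apply/matrixP => i j; rewrite !mxE esym. Qed.

Lemma join_clique_sym n p (e : rel 'I_n) :
  symmetric e -> symmetric (join_clique p e).
Proof.
move=> esym i j; rewrite /join_clique.
by case: (split i) => a; case: (split j) => b //; rewrite (esym, eq_sym).
Qed.

Lemma adj_join_clique (R : pzRingType) m p (e : rel 'I_m) :
  adj_mx R (join_clique p e) =
  block_mx (adj_mx R e) (const_mx 1) (const_mx 1) (const_mx 1 - 1%:M).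
Proof.
apply/matrixP => i j; rewrite -(splitK i) -(splitK j).
case: (split i) => a; case: (split j) => b;
  rewrite /= ?block_mxEul ?block_mxEur ?block_mxEdl ?block_mxEdr !mxE
    /join_clique ?(unsplitK (inl _)) ?(unsplitK (inr _)) //.
by case: (a == b); rewrite ?subrr ?subr0.
Qed.

Lemma quad_block_mx (R : pzSemiRingType) k m p (y : 'M[R]_(k, m))
    (z : 'M[R]_(k, p)) A B C D :
  row_mx y z *m block_mx A B C D *m (row_mx y z)^T =
  y *m A *m y^T + z *m C *m y^T + (y *m B *m z^T + z *m D *m z^T).
Proof. by rewrite mul_row_block tr_row_mx mul_row_col !mulmxDl. Qed.

Lemma quad_const_mx (R : comPzRingType) m n (u : 'rV[R]_m) (v : 'rV[R]_n) a :
  (u *m const_mx a *m v^T) 0 0 = a * (\sum_i u 0 i) * (\sum_j v 0 j).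
Proof.
rewrite mxE mulr_sumr; apply: eq_bigr => j _.
rewrite !mxE; under eq_bigr do rewrite mxE.
by rewrite -mulr_suml [_ * a]mulrC.
Qed.

Lemma quad_join_clique (R : comPzRingType) m p (e : rel 'I_m) (y : 'rV[R]_m)
    (z : 'rV[R]_p) (x := row_mx y z) :
  (x *m adj_mx R (join_clique p e) *m x^T) 0 0 =
  (y *m adj_mx R e *m y^T) 0 0 + 2 * (\sum_i y 0 i) * (\sum_k z 0 k)
  + (\sum_k z 0 k) ^+ 2 - (z *m z^T) 0 0.
Proof.
rewrite /x adj_join_clique quad_block_mx mulmxBr mulmxBl mulmx1.
rewrite ![(_ + _ : 'M_1) 0 0]mxE ![(- _ : 'M_1) 0 0]mxE !quad_const_mx.
ring.
Qed.

Lemma quad_adj_isolated (R : realDomainType) n (e : rel 'I_n) v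
    (y : 'rV[R]_n) :
  symmetric e -> isolated e v ->
  (y *m adj_mx R e *m y^T) 0 0 <= (\sum_(i | i != v) `|y 0 i|) ^+ 2.
Proof.
move=> esym hv; rewrite big_mkcond /= expr2 big_distrlr /= mxE.
apply: ler_sum => j _; rewrite !mxE mulr_suml; apply: ler_sum => i _.
rewrite !mxE; have [->|jv] /= := eqVneq j v.
  by rewrite esym (negbTE (hv i)) mulr0n !mulr0 !mul0r.
have [->|iv] /= := eqVneq i v.
  by rewrite (negbTE (hv j)) mulr0n !mulr0 mul0r.
case: (e i j); last by rewrite mulr0n mulr0 mul0r mulr_ge0 ?normr_ge0.
by rewrite mulr1n mulr1 mulrC -normrM ler_norm.
Qed.

Lemma sum_if_eq (R : pzSemiRingType) k (v : 'I_k) (a b : R) :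
  \sum_i (if i == v then a else b) = a + k.-1%:R * b.
Proof.
rewrite (bigD1 v) //= eqxx (eq_bigr (fun _ => b)) => [|i /negbTE -> //].
by rewrite sumr_const cardC1 card_ord mulr_natl.
Qed.

Definition join_test_vector (R : Type) m p (v : 'I_m) (a b c : R) :
  'rV[R]_(m + p) := row_mx (\row_i (if i == v then a else b)) (const_mx c).

Lemma join_test_vector_norm (R : comPzRingType) m p (v : 'I_m) (a b c : R)
    (x := join_test_vector p v a b c) :
  (x *m x^T) 0 0 = a ^+ 2 + m.-1%:R * b ^+ 2 + p%:R * c ^+ 2.
Proof.
rewrite /x /join_test_vector tr_row_mx mul_row_col.
rewrite [(_ + _ : 'M_1) 0 0]mxE !mxE.
rewrite -(sum_if_eq v); congr (_ + _).
  by apply: eq_bigr => i _; rewrite !mxE; case: (i == v).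
rewrite (eq_bigr (fun _ => c ^+ 2)) ?sumr_const ?card_ord ?mulr_natl //.
by move=> k _; rewrite !mxE.
Qed.

Lemma join_test_vector_quad_le (R : realDomainType) m p (e : rel 'I_m) v
    (a b c : R) (x := join_test_vector p v a b c) :
  symmetric e -> isolated e v -> 0 <= b ->
  (x *m adj_mx R (join_clique p e) *m x^T) 0 0 <=
  (m.-1%:R * b) ^+ 2 + 2 * (a + m.-1%:R * b) * (p%:R * c) + (p%:R * c) ^+ 2
  - p%:R * c ^+ 2.
Proof.
move=> esym hv b_ge0; rewrite /x /join_test_vector quad_join_clique.
set y := \row_i _.
have sum_y : \sum_i y 0 i = a + m.-1%:R * b.
  by rewrite -(sum_if_eq v); apply: eq_bigr => i _; rewrite mxE.
have sum_z : \sum_k (const_mx c : 'rV_p) 0 k = p%:R * c.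
  rewrite (eq_bigr (fun _ => c)) ?sumr_const ?card_ord ?mulr_natl //.
  by move=> k _; rewrite mxE.
have norm_z :
    ((const_mx c : 'rV_p) *m (const_mx c : 'rV_p)^T) 0 0 = p%:R * c ^+ 2.
  rewrite mxE (eq_bigr (fun _ => c ^+ 2)) ?sumr_const ?card_ord ?mulr_natl //.
  by move=> k _; rewrite !mxE expr2.
have sum_y_abs : \sum_(i | i != v) `|y 0 i| = m.-1%:R * b.
  rewrite (eq_bigr (fun _ => b)) => [|i /negbTE iv]; last first.
    by rewrite mxE iv ger0_norm.
  by rewrite sumr_const cardC1 card_ord mulr_natl.
rewrite sum_y sum_z norm_z lerD2r !lerD2r -sum_y_abs.
exact: quad_adj_isolated.
Qed.

Theorem mainTheorem4 (R : realType) (lambda : nat) (hl : (2 <= lambda)%N) :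
  exists p : nat, (0 < p)%N /\
    forall e : rel 'I_(lambda ^ 2 + 2),
      simple_graph e -> (exists v, isolated e v) ->
      exists theta : R,
        smallest_eigenvalue (adj_mx R (join_clique p e)) theta /\
        theta < - (lambda%:R).
Proof.
pose p := (lambda * (lambda ^ 2 + lambda + 1))%N.
exists p; split; first by rewrite muln_gt0 (leq_trans _ hl) // !addn_gt0 orbT.
move=> e [esym _] [v hv]; pose l : R := lambda%:R.
have l_gt0 : 0 < l by rewrite ltr0n (leq_trans _ hl).
pose x := join_test_vector p v (l ^+ 2 + l + 1) l (-1).
apply: (@symmetric_smallest_eigenvalue_lt _ _ _ x).
  exact/tr_adj_mx/join_clique_sym.
have := join_test_vector_quad_le p (l ^+ 2 + l + 1) (-1) esym hv (ltW l_gt0).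
rewrite join_test_vector_norm.
have -> : ((lambda ^ 2 + 2).-1)%:R = l ^+ 2 + 1 :> R by rewrite addn2 -natr1 natrX.
have -> : p%:R = l * (l ^+ 2 + l + 1) :> R by rewrite /p natrM !natrD natrX.
move=> /le_lt_trans; apply; rewrite -subr_gt0.
rewrite -/l; set gap := (X in 0 < X).
have -> : gap = 2 * l * (l ^+ 2 + l + 1) by rewrite /gap; ring.
by rewrite !mulr_gt0 ?addr_gt0 ?exprn_gt0.
Qed.
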